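(* Let $h_{uA}(u,r,x^C)$ and symmetric $\mathring\gamma$-traceless $h_{AB}(u,r,x^C)$ be smooth, set $\check h_{uA}=h_{uA}/r^2$, $\check h_{AB}=h_{AB}/r^2$, and $V(r)=\varepsilon r-\alpha^2r^3-2m$. Let $i\ge0$ and suppose that the $i$-th $u$-derivatives of the two equations $$\partial_r\big[r^4\partial_r\check h_{uA}\big]=\mathring D^B\big[r^2\partial_r\check h_{AB}\big],$$ $$0=\partial_r\Big[r\partial_u\check h_{AB}-\tfrac12V\partial_r\check h_{AB}-\tfrac{V}{2r}\check h_{AB}-r\,\mathrm{TS}[\mathring D_A\check h_{uB}]\Big]+\Big(\frac{m}{r^2}-\alpha^2r\Big)\check h_{AB}-\mathrm{TS}[\mathring D_A\check h_{uB}]$$ hold. Define $$Q^{[3,i+1]}_A:=\mathring D^B\Big[2r\partial_u^{i+1}\check h_{AB}-V\partial_r\partial_u^i\check h_{AB}-\frac1{r^2}\partial_r\big(r^4\,\mathrm{TS}[\mathring D_A\partial_u^i\check h_{uB}]\big)+(P-\varepsilon)\partial_u^i\check h_{AB}\Big]+\alpha^2r^4\partial_r\partial_u^i\check h_{uA}+2m\big(3\partial_u^i\check h_{uA}+r\partial_r\partial_u^i\check h_{uA}\big).$$ Then $\partial_rQ^{[3,i+1]}_A=0$.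
   Context: $\mathbf S$ is a compact orientable two-dimensional manifold with metric $\mathring\gamma$ of constant Gauss curvature $\varepsilon\in\{0,\pm1\}$, Levi-Civita connection $\mathring D$; indices are raised with $\mathring\gamma$. Here $m\in\mathbb R$, $\alpha\in\mathbb R\cup i\mathbb R$ are constants, $(u,r,x^A)$ coordinates with $x^A$ on $\mathbf S$. $\mathrm{TS}[X_{AB}]=\frac12(X_{AB}+X_{BA}-\mathring\gamma^{CD}X_{CD}\mathring\gamma_{AB})$ is the traceless symmetric part, and $P$ acts on symmetric traceless tensors by $Ph_{AB}=\mathrm{TS}[\mathring D_A\mathring D^Ch_{BC}]$. *)

(* Stdlib reals + Coquelicot.
   The surface S is described in a local coordinate chart (x^1,x^2) ranging
   over an open set U of R^2; all tensors are given by their components. *)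
From Stdlib Require Import Reals List.
From Coquelicot Require Import Coquelicot.
Open Scope R_scope.

Inductive idx := I1 | I2.
Definition sum2 (f : idx -> R) : R := f I1 + f I2.

(* scalar fields of (u, r, x^1, x^2) *)
Definition field := R -> R -> R -> R -> R.

Definition d_u (f : field) : field := fun u r x y => Derive (fun t => f t r x y) u.
Definition d_r (f : field) : field := fun u r x y => Derive (fun t => f u t x y) r.
Definition d_x (f : field) : field := fun u r x y => Derive (fun t => f u r t y) x.
Definition d_y (f : field) : field := fun u r x y => Derive (fun t => f u r x t) y.
Definition d_ang (A : idx) (f : field) : field :=
  match A with I1 => d_x f | I2 => d_y f end.
Fixpoint d_u_n (n : nat) (f : field) : field :=
  match n with O => f | S k => d_u (d_u_n k f) end.

Inductive coord := Cu | Cr | Cx | Cy.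
Definition dcoord (c : coord) (f : field) : field :=
  match c with Cu => d_u f | Cr => d_r f | Cx => d_x f | Cy => d_y f end.
Definition iter_d (l : list coord) (f : field) : field := fold_right dcoord f l.
Definition uncurry4 (f : field) : R * R * R * R -> R :=
  fun p => match p with (u, r, x, y) => f u r x y end.
Definition smooth_on (D : R * R * R * R -> Prop) (f : field) : Prop :=
  forall (l : list coord) (u r x y : R), D (u, r, x, y) ->
    continuous (uncurry4 (iter_d l f)) (u, r, x, y) /\
    ex_derive (fun t => iter_d l f t r x y) u /\
    ex_derive (fun t => iter_d l f u t x y) r /\
    ex_derive (fun t => iter_d l f u r t y) x /\
    ex_derive (fun t => iter_d l f u r x t) y.

Definition metric := idx -> idx -> R -> R -> R.
Definition lift (f : R -> R -> R) : field := fun _ _ x y => f x y.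

Definition det_g (g : metric) (x y : R) : R :=
  g I1 I1 x y * g I2 I2 x y - g I1 I2 x y * g I2 I1 x y.
Definition ginv (g : metric) (A B : idx) (x y : R) : R :=
  match A, B with
  | I1, I1 => g I2 I2 x y / det_g g x y
  | I2, I2 => g I1 I1 x y / det_g g x y
  | I1, I2 => - g I1 I2 x y / det_g g x y
  | I2, I1 => - g I2 I1 x y / det_g g x y
  end.
Definition d2 (A : idx) (f : R -> R -> R) (x y : R) : R :=
  match A with
  | I1 => Derive (fun t => f t y) x
  | I2 => Derive (fun t => f x t) y
  end.
Definition Gam (g : metric) (C A B : idx) (x y : R) : R :=
  / 2 * sum2 (fun D => ginv g C D x y *
     (d2 A (g D B) x y + d2 B (g D A) x y - d2 D (g A B) x y)).
Definition Riem (g : metric) (A B C D : idx) (x y : R) : R :=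
  d2 C (Gam g A D B) x y - d2 D (Gam g A C B) x y
  + sum2 (fun E => Gam g A C E x y * Gam g E D B x y
                   - Gam g A D E x y * Gam g E C B x y).
Definition gauss_curv (g : metric) (x y : R) : R :=
  sum2 (fun A => g I1 A x y * Riem g A I2 I1 I2 x y) / det_g g x y.

Definition Dcov1 (g : metric) (w : idx -> field) (A B : idx) : field :=
  fun u r x y => d_ang A (w B) u r x y
                 - sum2 (fun C => Gam g C A B x y * w C u r x y).
Definition Dcov2 (g : metric) (h : idx -> idx -> field) (A B C : idx) : field :=
  fun u r x y => d_ang A (h B C) u r x y
    - sum2 (fun D => Gam g D A B x y * h D C u r x y
                     + Gam g D A C x y * h B D u r x y).
Definition div2 (g : metric) (X : idx -> idx -> field) (A : idx) : field :=
  fun u r x y => sum2 (fun B => sum2 (fun C =>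
                   ginv g B C x y * Dcov2 g X C A B u r x y)).
Definition TS (g : metric) (X : idx -> idx -> field) (A B : idx) : field :=
  fun u r x y => / 2 * (X A B u r x y + X B A u r x y
     - sum2 (fun C => sum2 (fun D => ginv g C D x y * X C D u r x y))
       * g A B x y).
(* P h_AB = TS[D_A D^C h_BC] *)
Definition Pop (g : metric) (h : idx -> idx -> field) : idx -> idx -> field :=
  TS g (Dcov1 g (div2 g h)).

Definition Vfun (eps a2 m r : R) : R := eps * r - a2 * r ^ 3 - 2 * m.

Definition chk1 (w : idx -> field) (A : idx) : field :=
  fun u r x y => w A u r x y / r ^ 2.
Definition chk2 (h : idx -> idx -> field) (A B : idx) : field :=
  fun u r x y => h A B u r x y / r ^ 2.

(* first equation: LHS - RHS *)
Definition Eq1 (g : metric) (hu : idx -> field) (h : idx -> idx -> field)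
    (A : idx) : field :=
  fun u r x y =>
    d_r (fun u r x y => r ^ 4 * d_r (chk1 hu A) u r x y) u r x y
    - div2 g (fun A B => fun u r x y => r ^ 2 * d_r (chk2 h A B) u r x y) A u r x y.

(* second equation: its right-hand side (required to vanish) *)
Definition Eq2 (g : metric) (eps a2 m : R) (hu : idx -> field)
    (h : idx -> idx -> field) (A B : idx) : field :=
  fun u r x y =>
    d_r (fun u r x y =>
           r * d_u (chk2 h A B) u r x y
           - / 2 * Vfun eps a2 m r * d_r (chk2 h A B) u r x y
           - Vfun eps a2 m r / (2 * r) * chk2 h A B u r x y
           - r * TS g (Dcov1 g (chk1 hu)) A B u r x y) u r x y
    + (m / r ^ 2 - a2 * r) * chk2 h A B u r x y
    - TS g (Dcov1 g (chk1 hu)) A B u r x y.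

(* the tensor inside D^B[...] in Q^{[3,i+1]}_A *)
Definition Qbracket (g : metric) (eps a2 m : R) (i : nat) (hu : idx -> field)
    (h : idx -> idx -> field) (A B : idx) : field :=
  fun u r x y =>
    2 * r * d_u_n (S i) (chk2 h A B) u r x y
    - Vfun eps a2 m r * d_r (d_u_n i (chk2 h A B)) u r x y
    - / r ^ 2 * d_r (fun u r x y =>
          r ^ 4 * TS g (Dcov1 g (fun C => d_u_n i (chk1 hu C))) A B u r x y)
        u r x y
    + Pop g (fun C D => d_u_n i (chk2 h C D)) A B u r x y
    - eps * d_u_n i (chk2 h A B) u r x y.

Definition Q3 (g : metric) (eps a2 m : R) (i : nat) (hu : idx -> field)
    (h : idx -> idx -> field) (A : idx) : field :=
  fun u r x y =>
    div2 g (Qbracket g eps a2 m i hu h) A u r x y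
    + a2 * r ^ 4 * d_r (d_u_n i (chk1 hu A)) u r x y
    + 2 * m * (3 * d_u_n i (chk1 hu A) u r x y
               + r * d_r (d_u_n i (chk1 hu A)) u r x y).

(* Put a := d_u^i (h_u / r^2) and b := d_u^i (h / r^2).  The coefficients of both equations
   are independent of u and partial derivatives commute (Schwarz), so the i-th u-derivatives of
   the equations are the equations themselves for (a, b).  The first one says
   D^B d_r b_AB = r^-2 d_r (r^4 d_r a_A), hence P d_r b = r^-2 d_r (r^4 d_r TS[D a]); with this,
   d_r of the bracket in Q^[3,i+1] is twice the second equation minus
   (alpha^2 r^2 + 2m/r) d_r b.  Taking D^B and using the first equation once more, this cancels
   exactly against d_r of the alpha^2 and m terms of Q^[3,i+1].
   Smoothness of the intermediate fields is propagated through sums, products and quotients by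
   exhibiting families of fields that are closed under partial derivatives. *)

From Pilot Require Import Defs.
From Stdlib Require Import Reals List Lra.
From Coquelicot Require Import Coquelicot.
Open Scope R_scope.

Definition point := (R * R * R * R)%type.

Definition coord_at (c : coord) (p : point) : R :=
  match c, p with
  | Cu, (u, _, _, _) => u
  | Cr, (_, r, _, _) => r
  | Cx, (_, _, x, _) => x
  | Cy, (_, _, _, y) => y
  end.

Definition set_coord (c : coord) (t : R) (p : point) : point :=
  match c, p with
  | Cu, (_, r, x, y) => (t, r, x, y)
  | Cr, (u, _, x, y) => (u, t, x, y)
  | Cx, (u, r, _, y) => (u, r, t, y)
  | Cy, (u, r, x, _) => (u, r, x, t)
  end.

Definition angular (A : idx) : coord := match A with I1 => Cx | I2 => Cy end.

Lemma d_ang_dcoord A f u r x y : d_ang A f u r x y = dcoord (angular A) f u r x y.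
Proof. destruct A; reflexivity. Qed.

Lemma uncurry4_dcoord c f p :
  uncurry4 (dcoord c f) p = Derive (fun t => uncurry4 f (set_coord c t p)) (coord_at c p).
Proof. destruct p as [[[u r] x] y]; destruct c; reflexivity. Qed.

Lemma set_coord_id c p : set_coord c (coord_at c p) p = p.
Proof. destruct p as [[[u r] x] y]; destruct c; reflexivity. Qed.

Lemma set_coord_set_coord c s t p : set_coord c s (set_coord c t p) = set_coord c s p.
Proof. destruct p as [[[u r] x] y]; destruct c; reflexivity. Qed.

Lemma set_coordC c1 c2 s t p : c1 <> c2 ->
  set_coord c1 s (set_coord c2 t p) = set_coord c2 t (set_coord c1 s p).
Proof. destruct p as [[[u r] x] y]; destruct c1, c2; intros; congruence || reflexivity. Qed.

Lemma coord_at_set_coord c t p : coord_at c (set_coord c t p) = t.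
Proof. destruct p as [[[u r] x] y]; destruct c; reflexivity. Qed.

Lemma ball_set_coord c t p q (e : posreal) :
  ball p e q -> ball (coord_at c p) e t -> ball p e (set_coord c t q).
Proof.
  destruct p as [[[u r] x] y], q as [[[u' r'] x'] y'].
  intros [[[Hu Hr] Hx] Hy] Ht; destruct c; repeat split; assumption.
Qed.

Lemma Derive_set_coord f c s q :
  Derive (fun z => uncurry4 f (set_coord c z q)) s = uncurry4 (dcoord c f) (set_coord c s q).
Proof.
  rewrite uncurry4_dcoord, coord_at_set_coord. apply Derive_ext.
  intros z. rewrite set_coord_set_coord. reflexivity.
Qed.

Lemma Derive_set_coord_other f c1 c2 s t p : c1 <> c2 ->
  Derive (fun w => uncurry4 f (set_coord c1 s (set_coord c2 w p))) t
  = uncurry4 (dcoord c2 f) (set_coord c1 s (set_coord c2 t p)).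
Proof.
  intros Hc. rewrite (set_coordC c1 c2) by exact Hc. rewrite <- Derive_set_coord.
  apply Derive_ext. intros w. rewrite set_coordC by exact Hc. reflexivity.
Qed.

Lemma locally_2d_set_coord (P : point -> Prop) c1 c2 p : locally p P ->
  locally_2d (fun s t => P (set_coord c1 s (set_coord c2 t p))) (coord_at c1 p) (coord_at c2 p).
Proof.
  intros [e He]. exists e. intros s t Hs Ht.
  apply He, ball_set_coord; [apply ball_set_coord; [apply ball_center|]|]; assumption.
Qed.

Lemma continuity_2d_pt_set_coord f c1 c2 p : continuous (uncurry4 f) p ->
  continuity_2d_pt (fun s t => uncurry4 f (set_coord c1 s (set_coord c2 t p)))
                   (coord_at c1 p) (coord_at c2 p).
Proof.
  intros Hf e. rewrite !set_coord_id.
  exact (locally_2d_set_coord _ c1 c2 p (Hf _ (locally_ball _ e))).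
Qed.

Section Regularity.

Variable D : point -> Prop.
Hypothesis hD : open D.

Definition eq_on (f g : field) : Prop :=
  forall u r x y, D (u, r, x, y) -> f u r x y = g u r x y.

Definition regular_at (f : field) (p : point) : Prop :=
  continuous (uncurry4 f) p /\
  forall c, ex_derive (fun t => uncurry4 f (set_coord c t p)) (coord_at c p).

Lemma locally_set_coord c p : D p -> locally (coord_at c p) (fun t => D (set_coord c t p)).
Proof.
  intros Hp. destruct (hD p Hp) as [e He].
  exists e. intros t Ht. apply He, ball_set_coord; [apply ball_center | exact Ht].
Qed.

Lemma eq_on_locally f g p : eq_on f g -> D p ->
  locally p (fun q => uncurry4 f q = uncurry4 g q).
Proof.
  intros Hfg Hp. apply (filter_imp D); [|exact (hD p Hp)].
  intros [[[u r] x] y]; apply Hfg.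
Qed.

Lemma dcoord_eq_on c f g : eq_on f g -> eq_on (dcoord c f) (dcoord c g).
Proof.
  intros Hfg u r x y H.
  change (uncurry4 (dcoord c f) (u, r, x, y) = uncurry4 (dcoord c g) (u, r, x, y)).
  rewrite !uncurry4_dcoord. apply Derive_ext_loc.
  apply (filter_imp (fun t => D (set_coord c t (u, r, x, y)))); [|exact (locally_set_coord c _ H)].
  intros t Ht. destruct (set_coord c t (u, r, x, y)) as [[[u' r'] x'] y']. apply Hfg, Ht.
Qed.

Lemma regular_at_eq_on f g p : eq_on f g -> D p -> regular_at f p -> regular_at g p.
Proof.
  intros Hfg Hp [Hcont Hder]. split.
  - exact (continuous_ext_loc _ _ _ (eq_on_locally f g p Hfg Hp) Hcont).
  - intros c. apply (ex_derive_ext_loc (fun t => uncurry4 f (set_coord c t p))); [|apply Hder].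
    apply (filter_imp (fun t => D (set_coord c t p))); [|exact (locally_set_coord c p Hp)].
    intros t. destruct (set_coord c t p) as [[[u r] x] y]. apply Hfg.
Qed.

Lemma smooth_on_regular f : smooth_on D f <-> forall l p, D p -> regular_at (iter_d l f) p.
Proof.
  split.
  - intros Hf l [[[u r] x] y] Hp.
    destruct (Hf l u r x y Hp) as (Hc & Hu & Hr & Hx & Hy).
    split; [exact Hc | intros []; assumption].
  - intros Hf l u r x y Hp. destruct (Hf l _ Hp) as [Hc Hd].
    exact (conj Hc (conj (Hd Cu) (conj (Hd Cr) (conj (Hd Cx) (Hd Cy))))).
Qed.

Lemma smooth_on_regular_at f p : smooth_on D f -> D p -> regular_at f p.
Proof. intros Hf. exact (proj1 (smooth_on_regular f) Hf nil p). Qed.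

Lemma d_ang_eq_on A f g : eq_on f g -> eq_on (d_ang A f) (d_ang A g).
Proof. destruct A; [apply (dcoord_eq_on Cx) | apply (dcoord_eq_on Cy)]. Qed.

Lemma iter_d_eq_on l f g : eq_on f g -> eq_on (iter_d l f) (iter_d l g).
Proof. induction l as [|c l IH]; simpl; auto using dcoord_eq_on. Qed.

Lemma smooth_on_eq_on f g : eq_on f g -> smooth_on D f -> smooth_on D g.
Proof.
  rewrite !smooth_on_regular. intros Hfg Hf l p Hp.
  apply (regular_at_eq_on (iter_d l f)); auto using iter_d_eq_on.
Qed.

Lemma smooth_on_dcoord c f : smooth_on D f -> smooth_on D (dcoord c f).
Proof.
  intros Hf l. replace (iter_d l (dcoord c f)) with (iter_d (l ++ c :: nil) f).
  - apply Hf.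
  - unfold iter_d. rewrite fold_right_app. reflexivity.
Qed.

Lemma smooth_on_coind (W : field -> Prop) :
  (forall w p, W w -> D p -> regular_at w p) ->
  (forall w c, W w -> exists w', W w' /\ eq_on (dcoord c w) w') ->
  forall w, W w -> smooth_on D w.
Proof.
  intros Hreg Hder.
  assert (Hiter : forall l w, W w -> exists w', W w' /\ eq_on (iter_d l w) w').
  { induction l as [|c l IH]; intros w Hw.
    - exists w. split; [exact Hw | intros ? ? ? ? ?; reflexivity].
    - destruct (IH w Hw) as (w1 & Hw1 & E1). destruct (Hder w1 c Hw1) as (w2 & Hw2 & E2).
      exists w2. split; [exact Hw2|]. intros u r x y H. simpl.
      rewrite (dcoord_eq_on c _ _ E1 u r x y H). apply E2, H. }
  intros w Hw. apply smooth_on_regular. intros l p Hp.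
  destruct (Hiter l w Hw) as (w' & Hw' & E).
  apply (regular_at_eq_on w'); auto.
  intros u r x y H. symmetry. apply E, H.
Qed.

Ltac pointwise := first [ intros [[[? ?] ?] ?]; reflexivity
                        | intros ?; match goal with |- context [set_coord ?c ?t ?p] =>
                            destruct (set_coord c t p) as [[[? ?] ?] ?]; reflexivity end ].

Lemma regular_at_plus f g p : regular_at f p -> regular_at g p ->
  regular_at (fun u r x y => f u r x y + g u r x y) p.
Proof.
  intros [Cf Df] [Cg Dg]. split.
  - apply (continuous_ext (fun q => uncurry4 f q + uncurry4 g q)); [pointwise|].
    apply (continuous_plus (uncurry4 f) (uncurry4 g)); assumption.
  - intros c.
    apply (ex_derive_ext (fun t => uncurry4 f (set_coord c t p) + uncurry4 g (set_coord c t p)));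
      [pointwise|].
    apply (ex_derive_plus (fun t => uncurry4 f (set_coord c t p))
                          (fun t => uncurry4 g (set_coord c t p))); auto.
Qed.

Lemma regular_at_mult f g p : regular_at f p -> regular_at g p ->
  regular_at (fun u r x y => f u r x y * g u r x y) p.
Proof.
  intros [Cf Df] [Cg Dg]. split.
  - apply (continuous_ext (fun q => uncurry4 f q * uncurry4 g q)); [pointwise|].
    apply (continuous_mult (K := R_AbsRing) (uncurry4 f) (uncurry4 g)); assumption.
  - intros c.
    apply (ex_derive_ext (fun t => uncurry4 f (set_coord c t p) * uncurry4 g (set_coord c t p)));
      [pointwise|].
    apply (ex_derive_mult (fun t => uncurry4 f (set_coord c t p))
                          (fun t => uncurry4 g (set_coord c t p))); auto.
Qed.

Lemma dcoord_plus c f g u r x y :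
  regular_at f (u, r, x, y) -> regular_at g (u, r, x, y) ->
  dcoord c (fun u r x y => f u r x y + g u r x y) u r x y = dcoord c f u r x y + dcoord c g u r x y.
Proof.
  intros [_ Df] [_ Dg].
  change (uncurry4 (dcoord c (fun u r x y => f u r x y + g u r x y)) (u, r, x, y)
    = uncurry4 (dcoord c f) (u, r, x, y) + uncurry4 (dcoord c g) (u, r, x, y)).
  rewrite !uncurry4_dcoord, <- Derive_plus by auto. apply Derive_ext. pointwise.
Qed.

Lemma dcoord_minus c f g u r x y :
  regular_at f (u, r, x, y) -> regular_at g (u, r, x, y) ->
  dcoord c (fun u r x y => f u r x y - g u r x y) u r x y = dcoord c f u r x y - dcoord c g u r x y.
Proof.
  intros [_ Df] [_ Dg].
  change (uncurry4 (dcoord c (fun u r x y => f u r x y - g u r x y)) (u, r, x, y)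
    = uncurry4 (dcoord c f) (u, r, x, y) - uncurry4 (dcoord c g) (u, r, x, y)).
  rewrite !uncurry4_dcoord, <- Derive_minus by auto. apply Derive_ext. pointwise.
Qed.

Lemma dcoord_mult c f g u r x y :
  regular_at f (u, r, x, y) -> regular_at g (u, r, x, y) ->
  dcoord c (fun u r x y => f u r x y * g u r x y) u r x y
  = dcoord c f u r x y * g u r x y + f u r x y * dcoord c g u r x y.
Proof.
  intros [_ Df] [_ Dg].
  change (uncurry4 (dcoord c (fun u r x y => f u r x y * g u r x y)) (u, r, x, y)
    = uncurry4 (dcoord c f) (u, r, x, y) * uncurry4 g (u, r, x, y)
      + uncurry4 f (u, r, x, y) * uncurry4 (dcoord c g) (u, r, x, y)).
  rewrite !uncurry4_dcoord.
  rewrite (Derive_ext _ (fun t => uncurry4 f (set_coord c t (u, r, x, y))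
                                 * uncurry4 g (set_coord c t (u, r, x, y)))) by pointwise.
  rewrite Derive_mult, set_coord_id by auto. reflexivity.
Qed.

Lemma regular_at_const k p : regular_at (fun _ _ _ _ => k) p.
Proof.
  split.
  - apply (continuous_ext (fun _ => k)); [pointwise | apply continuous_const].
  - intros c. apply (ex_derive_ext (fun _ => k)); [pointwise | apply ex_derive_const].
Qed.

Lemma dcoord_const c k u r x y : dcoord c (fun _ _ _ _ => k) u r x y = 0.
Proof. destruct c; apply (Derive_const k). Qed.

Definition sumF (L : list field) : field :=
  fun u r x y => fold_right (fun f s => f u r x y + s) 0 L.

Lemma regular_at_sumF L p : List.Forall (fun f => regular_at f p) L -> regular_at (sumF L) p.
Proof.
  induction 1 as [|f L Hf _ IH].
  - apply regular_at_const.
  - exact (regular_at_plus f (sumF L) p Hf IH).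
Qed.

Lemma sumF_app L1 L2 u r x y : sumF (L1 ++ L2) u r x y = sumF L1 u r x y + sumF L2 u r x y.
Proof. induction L1 as [|f L1 IH]; unfold sumF in *; simpl; [ring | rewrite IH; ring]. Qed.

Lemma smooth_on_sumF (W : field -> Prop) :
  (forall w p, W w -> D p -> regular_at w p) ->
  (forall w c, W w -> exists L, List.Forall W L /\ eq_on (dcoord c w) (sumF L)) ->
  forall L, List.Forall W L -> smooth_on D (sumF L).
Proof.
  intros Hreg Hder L0 HL0.
  apply (smooth_on_coind (fun f => exists L, List.Forall W L /\ f = sumF L)); [| |eauto].
  - intros w p (L & HL & ->) Hp. apply regular_at_sumF.
    eapply Forall_impl; [|exact HL]. intros f Hf. auto.
  - intros w c (L & HL & ->).
    induction HL as [|f L Hf HL IH].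
    + exists (sumF nil). split; [exists nil; auto|]. intros u r x y _. apply dcoord_const.
    + destruct (Hder f c Hf) as (L1 & HL1 & E1).
      destruct IH as (w2 & (L2 & HL2 & ->) & E2).
      exists (sumF (L1 ++ L2)).
      split; [exists (L1 ++ L2); split; [apply Forall_app; auto | reflexivity]|].
      intros u r x y H. rewrite sumF_app, <- E1, <- E2 by exact H.
      apply dcoord_plus; [|apply regular_at_sumF; eapply Forall_impl; [|exact HL]]; eauto.
Qed.

Lemma regular_at_comp (phi : R -> R) f p :
  ex_derive phi (uncurry4 f p) -> regular_at f p -> regular_at (fun u r x y => phi (f u r x y)) p.
Proof.
  intros Hphi [Cf Df]. split.
  - apply (continuous_ext (fun q => phi (uncurry4 f q))); [pointwise|].
    apply (continuous_comp (uncurry4 f) phi); [exact Cf|].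
    exact (ex_derive_continuous (K := R_AbsRing) phi _ Hphi).
  - intros c. apply (ex_derive_ext (fun t => phi (uncurry4 f (set_coord c t p)))); [pointwise|].
    apply (ex_derive_comp phi); [|apply Df]. rewrite set_coord_id. exact Hphi.
Qed.

Lemma dcoord_comp (phi : R -> R) dphi c f u r x y :
  is_derive phi (f u r x y) dphi -> regular_at f (u, r, x, y) ->
  dcoord c (fun u r x y => phi (f u r x y)) u r x y = dphi * dcoord c f u r x y.
Proof.
  intros Hphi [_ Df].
  change (uncurry4 (dcoord c (fun u r x y => phi (f u r x y))) (u, r, x, y)
    = dphi * uncurry4 (dcoord c f) (u, r, x, y)).
  rewrite !uncurry4_dcoord.
  rewrite (Derive_ext _ (fun t => phi (uncurry4 f (set_coord c t (u, r, x, y))))) by pointwise.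
  rewrite Derive_comp; [| rewrite set_coord_id; exists dphi; exact Hphi | apply Df].
  rewrite set_coord_id. change (uncurry4 f (u, r, x, y)) with (f u r x y).
  rewrite (is_derive_unique _ _ _ Hphi). apply Rmult_comm.
Qed.

Lemma smooth_on_affine_radius k1 k0 : smooth_on D (fun _ r _ _ => k1 * r + k0).
Proof.
  apply (smooth_on_coind (fun w => exists k1 k0, w = fun _ r _ _ => k1 * r + k0)); [| |eauto].
  - intros w [[[u r] x] y] (a & b & ->) _. split.
    + apply (continuous_ext (fun q => a * snd (fst (fst q)) + b)); [pointwise|].
      apply (continuous_plus (fun q : point => a * snd (fst (fst q))) (fun _ => b));
        [|apply continuous_const].
      apply (continuous_scal_r a (fun q : point => snd (fst (fst q)))).
      apply (continuous_comp (fun q : point => fst (fst q)) snd); [|apply continuous_snd].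
      apply (continuous_comp (fun q : point => fst q) fst); apply continuous_fst.
    + intros []; simpl; auto_derive; auto.
  - intros w c (a & b & ->). exists (fun _ r _ _ => 0 * r + match c with Cr => a | _ => 0 end).
    split; [eauto|]. intros u r x y _.
    destruct c; apply is_derive_unique; auto_derive; auto; ring.
Qed.

Lemma smooth_on_const k : smooth_on D (fun _ _ _ _ => k).
Proof.
  apply (smooth_on_eq_on (fun _ r _ _ => 0 * r + k)); [intros ? ? ? ? _; ring|].
  apply smooth_on_affine_radius.
Qed.

Lemma smooth_on_radius : smooth_on D (fun _ r _ _ => r).
Proof.
  apply (smooth_on_eq_on (fun _ r _ _ => 1 * r + 0)); [intros ? ? ? ? _; ring|].
  apply smooth_on_affine_radius.
Qed.

Lemma smooth_on_plus f g : smooth_on D f -> smooth_on D g ->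
  smooth_on D (fun u r x y => f u r x y + g u r x y).
Proof.
  intros Hf Hg.
  apply (smooth_on_coind (fun w => exists f g, smooth_on D f /\ smooth_on D g /\
                           w = fun u r x y => f u r x y + g u r x y)); [| |eauto].
  - intros w p (f' & g' & Hf' & Hg' & ->) Hp.
    apply regular_at_plus; apply smooth_on_regular_at; assumption.
  - intros w c (f' & g' & Hf' & Hg' & ->).
    exists (fun u r x y => dcoord c f' u r x y + dcoord c g' u r x y).
    split; [exists (dcoord c f'), (dcoord c g'); auto using smooth_on_dcoord|].
    intros u r x y H. apply dcoord_plus; apply smooth_on_regular_at; assumption.
Qed.

Lemma smooth_on_mult f g : smooth_on D f -> smooth_on D g ->
  smooth_on D (fun u r x y => f u r x y * g u r x y).
Proof.
  intros Hf Hg.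
  pose (W := fun w => exists f g, smooth_on D f /\ smooth_on D g /\
                        w = fun u r x y => f u r x y * g u r x y).
  apply (smooth_on_eq_on (sumF ((fun u r x y => f u r x y * g u r x y) :: nil))).
  { intros u r x y _. unfold sumF. simpl. ring. }
  apply (smooth_on_sumF W); [| |repeat constructor; unfold W; eauto].
  - intros w p (f' & g' & Hf' & Hg' & ->) Hp.
    apply regular_at_mult; apply smooth_on_regular_at; assumption.
  - intros w c (f' & g' & Hf' & Hg' & ->).
    exists ((fun u r x y => dcoord c f' u r x y * g' u r x y)
            :: (fun u r x y => f' u r x y * dcoord c g' u r x y) :: nil).
    split.
    { repeat constructor; [exists (dcoord c f'), g' | exists f', (dcoord c g')];
        auto using smooth_on_dcoord. }
    intros u r x y H. unfold sumF. simpl.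
    rewrite dcoord_mult by (apply smooth_on_regular_at; assumption). ring.
Qed.

Lemma is_derive_inv_pow k z : z <> 0 -> is_derive (fun z => (/ z) ^ k) z (- INR k * (/ z) ^ S k).
Proof.
  intros Hz. auto_derive; [exact Hz|].
  destruct k as [|k]; simpl; [ring | field; exact Hz].
Qed.

Lemma smooth_on_inv f : smooth_on D f -> (forall u r x y, D (u, r, x, y) -> f u r x y <> 0) ->
  smooth_on D (fun u r x y => / f u r x y).
Proof.
  intros Hf Hnz.
  pose (W := fun w => exists a k, smooth_on D a /\
                        w = fun u r x y => a u r x y * (/ f u r x y) ^ k).
  apply (smooth_on_eq_on (sumF ((fun u r x y => 1 * (/ f u r x y) ^ 1) :: nil))).
  { intros u r x y _. unfold sumF. simpl. ring. }
  apply (smooth_on_sumF W); [| |repeat constructor; exists (fun _ _ _ _ => 1), 1%nat;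
                                 auto using smooth_on_const].
  - intros w [[[u r] x] y] (a & k & Ha & ->) Hp.
    apply regular_at_mult; [apply smooth_on_regular_at; assumption|].
    apply (regular_at_comp (fun z => (/ z) ^ k)); [|apply smooth_on_regular_at; assumption].
    eexists. apply is_derive_inv_pow, Hnz, Hp.
  - intros w c (a & k & Ha & ->).
    exists ((fun u r x y => dcoord c a u r x y * (/ f u r x y) ^ k)
            :: (fun u r x y => - INR k * a u r x y * dcoord c f u r x y * (/ f u r x y) ^ S k)
            :: nil).
    split.
    { repeat constructor; unfold W; [exists (dcoord c a), k; auto using smooth_on_dcoord|].
      exists (fun u r x y => - INR k * a u r x y * dcoord c f u r x y), (S k).
      auto 6 using smooth_on_mult, smooth_on_const, smooth_on_dcoord. }
    intros u r x y H. unfold sumF. simpl.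
    assert (Hreg : regular_at (fun u r x y => (/ f u r x y) ^ k) (u, r, x, y)).
    { apply (regular_at_comp (fun z => (/ z) ^ k)); [|apply smooth_on_regular_at; assumption].
      eexists. apply is_derive_inv_pow, Hnz, H. }
    rewrite dcoord_mult by (auto; apply smooth_on_regular_at; assumption).
    rewrite (dcoord_comp (fun z => (/ z) ^ k) _ c f) by
      (auto using is_derive_inv_pow; apply smooth_on_regular_at; assumption).
    simpl. ring.
Qed.

Lemma ex_derive_set_coord f c t q :
  regular_at f (set_coord c t q) -> ex_derive (fun z => uncurry4 f (set_coord c z q)) t.
Proof.
  intros [_ Hd]. specialize (Hd c). rewrite coord_at_set_coord in Hd.
  apply (ex_derive_ext _ _ _ (fun z => f_equal (uncurry4 f) (set_coord_set_coord c z t q)) Hd).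
Qed.

Lemma dcoord_comm c1 c2 f : c1 <> c2 -> smooth_on D f ->
  eq_on (dcoord c1 (dcoord c2 f)) (dcoord c2 (dcoord c1 f)).
Proof.
  intros Hc Hf u r x y H. set (p := (u, r, x, y)).
  change (uncurry4 (dcoord c1 (dcoord c2 f)) p = uncurry4 (dcoord c2 (dcoord c1 f)) p).
  set (F := fun s t => uncurry4 f (set_coord c1 s (set_coord c2 t p))).
  assert (Hswap : forall s t, set_coord c2 t (set_coord c1 s p) = set_coord c1 s (set_coord c2 t p))
    by (intros; symmetry; apply set_coordC, Hc).
  assert (E12 : forall s t, Derive (fun z => Derive (fun w => F z w) t) s
                = uncurry4 (dcoord c1 (dcoord c2 f)) (set_coord c1 s (set_coord c2 t p))).
  { intros s t. rewrite <- Derive_set_coord. apply Derive_ext. intros z.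
    apply Derive_set_coord_other, Hc. }
  assert (E21 : forall s t, Derive (fun z => Derive (fun w => F w z) s) t
                = uncurry4 (dcoord c2 (dcoord c1 f)) (set_coord c1 s (set_coord c2 t p))).
  { intros s t. rewrite <- Hswap, <- Derive_set_coord. apply Derive_ext. intros z.
    unfold F. rewrite Derive_set_coord, Hswap. reflexivity. }
  assert (Hp : p = set_coord c1 (coord_at c1 p) (set_coord c2 (coord_at c2 p) p))
    by (rewrite !set_coord_id; reflexivity).
  rewrite Hp, <- E12, <- E21. clear Hp.
  assert (Hdd : forall c c', smooth_on D (dcoord c (dcoord c' f)))
    by (intros; apply smooth_on_dcoord, smooth_on_dcoord, Hf).
  apply Schwarz.
  - apply (locally_2d_impl (fun s t => D (set_coord c1 s (set_coord c2 t p))));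
      [|exact (locally_2d_set_coord D c1 c2 p (hD p H))].
    apply locally_2d_forall. intros s t Hq.
    assert (Hreg : forall g, smooth_on D g -> regular_at g (set_coord c2 t (set_coord c1 s p)))
      by (intros; rewrite Hswap; apply smooth_on_regular_at; assumption).
    repeat split.
    + apply ex_derive_set_coord, smooth_on_regular_at; assumption.
    + apply (ex_derive_ext (fun z => uncurry4 f (set_coord c2 z (set_coord c1 s p)))).
      * intros z. unfold F. rewrite Hswap. reflexivity.
      * apply ex_derive_set_coord, Hreg, Hf.
    + apply (ex_derive_ext (fun z => uncurry4 (dcoord c2 f) (set_coord c1 z (set_coord c2 t p)))).
      * intros z. symmetry. apply Derive_set_coord_other, Hc.
      * apply ex_derive_set_coord, smooth_on_regular_at; [apply smooth_on_dcoord, Hf | exact Hq].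
    + apply (ex_derive_ext (fun z => uncurry4 (dcoord c1 f) (set_coord c2 z (set_coord c1 s p)))).
      * intros z. unfold F. rewrite Derive_set_coord, Hswap. reflexivity.
      * apply ex_derive_set_coord, Hreg, smooth_on_dcoord, Hf.
  - apply (continuity_2d_pt_ext _ _ _ _ (fun s t => eq_sym (E12 s t))).
    apply continuity_2d_pt_set_coord, smooth_on_regular_at; [apply Hdd | exact H].
  - apply (continuity_2d_pt_ext _ _ _ _ (fun s t => eq_sym (E21 s t))).
    apply continuity_2d_pt_set_coord, smooth_on_regular_at; [apply Hdd | exact H].
Qed.

Lemma smooth_on_opp f : smooth_on D f -> smooth_on D (fun u r x y => - f u r x y).
Proof.
  intros Hf. apply (smooth_on_eq_on (fun u r x y => -1 * f u r x y)); [intros ? ? ? ? _; ring|].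
  apply smooth_on_mult; [apply smooth_on_const | exact Hf].
Qed.

Lemma smooth_on_minus f g : smooth_on D f -> smooth_on D g ->
  smooth_on D (fun u r x y => f u r x y - g u r x y).
Proof.
  intros Hf Hg. apply (smooth_on_plus f (fun u r x y => - g u r x y)), smooth_on_opp; assumption.
Qed.

Lemma smooth_on_pow f n : smooth_on D f -> smooth_on D (fun u r x y => f u r x y ^ n).
Proof.
  intros Hf. induction n as [|n IH]; [exact (smooth_on_const 1)|].
  exact (smooth_on_mult f (fun u r x y => f u r x y ^ n) Hf IH).
Qed.

Lemma smooth_on_div f g : smooth_on D f -> smooth_on D g ->
  (forall u r x y, D (u, r, x, y) -> g u r x y <> 0) ->
  smooth_on D (fun u r x y => f u r x y / g u r x y).
Proof.
  intros Hf Hg Hnz.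
  apply (smooth_on_mult f (fun u r x y => / g u r x y)), smooth_on_inv; assumption.
Qed.

Lemma smooth_on_sum2 (F : idx -> field) : (forall C, smooth_on D (F C)) ->
  smooth_on D (fun u r x y => sum2 (fun C => F C u r x y)).
Proof. intros HF. exact (smooth_on_plus (F I1) (F I2) (HF I1) (HF I2)). Qed.

Lemma smooth_on_d_u_n n f : smooth_on D f -> smooth_on D (d_u_n n f).
Proof. induction n as [|n IH]; [auto | intros Hf; exact (smooth_on_dcoord Cu _ (IH Hf))]. Qed.

Lemma smooth_on_d_ang A f : smooth_on D f -> smooth_on D (d_ang A f).
Proof. destruct A; [apply (smooth_on_dcoord Cx) | apply (smooth_on_dcoord Cy)]. Qed.

Ltac smooth :=
  repeat (cbv beta; match goal with
  | |- _ <> 0 => solve [eauto with smooth]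
  | |- forall _, _ => intro
  | |- smooth_on ?D (fun u r x y => ?f u r x y) => change (smooth_on D f)
  | |- smooth_on _ (fun _ _ _ _ => ?k) => apply (smooth_on_const k) (* [_] would match any body *)
  | |- smooth_on _ (fun _ r _ _ => r) => apply smooth_on_radius
  | |- smooth_on _ (fun u r x y => @?f u r x y + @?g u r x y) => apply (smooth_on_plus f g)
  | |- smooth_on _ (fun u r x y => @?f u r x y - @?g u r x y) => apply (smooth_on_minus f g)
  | |- smooth_on _ (fun u r x y => @?f u r x y * @?g u r x y) => apply (smooth_on_mult f g)
  | |- smooth_on _ (fun u r x y => @?f u r x y / @?g u r x y) => apply (smooth_on_div f g)
  | |- smooth_on _ (fun u r x y => - @?f u r x y) => apply (smooth_on_opp f)
  | |- smooth_on _ (fun u r x y => / @?f u r x y) => apply (smooth_on_inv f)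
  | |- smooth_on _ (fun u r x y => @?f u r x y ^ ?n) => apply (smooth_on_pow f n)
  | |- smooth_on _ (fun u r x y => sum2 (fun C => @?F C u r x y)) => apply (smooth_on_sum2 F)
  | |- smooth_on _ (d_u_n _ _) => apply smooth_on_d_u_n
  | |- smooth_on _ (d_ang _ _) => apply smooth_on_d_ang
  | |- smooth_on _ (dcoord ?c _) => apply (smooth_on_dcoord c)
  | |- smooth_on _ (d_u _) => apply (smooth_on_dcoord Cu)
  | |- smooth_on _ (d_r _) => apply (smooth_on_dcoord Cr)
  | |- _ => solve [eauto with smooth]
  end).

Lemma d_u_n_commute (Op : (idx -> field) -> (idx -> idx -> field) -> field) :
  (forall a b, (forall C, smooth_on D (a C)) -> (forall C E, smooth_on D (b C E)) ->
     eq_on (d_u (Op a b)) (Op (fun C => d_u (a C)) (fun C E => d_u (b C E)))) ->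
  forall n a b, (forall C, smooth_on D (a C)) -> (forall C E, smooth_on D (b C E)) ->
    eq_on (d_u_n n (Op a b)) (Op (fun C => d_u_n n (a C)) (fun C E => d_u_n n (b C E))).
Proof.
  intros Hcomm n a b Ha Hb. induction n as [|n IH]; intros u r x y H; [reflexivity|].
  simpl. rewrite (dcoord_eq_on Cu _ _ IH) by exact H.
  apply Hcomm; [intros; apply smooth_on_d_u_n; auto .. | exact H].
Qed.

Ltac regular :=
  match goal with H : D (?u, ?r, ?x, ?y) |- regular_at _ (?u, ?r, ?x, ?y) =>
    apply (smooth_on_regular_at _ (u, r, x, y)); [solve [smooth] | exact H]
  end.

Definition nonangular (c : coord) : Prop := c = Cu \/ c = Cr.

Lemma Cu_nonangular : nonangular Cu.
Proof. left; reflexivity. Qed.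

Lemma Cr_nonangular : nonangular Cr.
Proof. right; reflexivity. Qed.

Lemma dcoord_coef_l c (k : R -> R -> R) F u r x y : nonangular c ->
  dcoord c (fun u r x y => k x y * F u r x y) u r x y = k x y * dcoord c F u r x y.
Proof. intros [-> | ->]; apply Derive_scal. Qed.

Lemma dcoord_coef_r c (k : R -> R -> R) F u r x y : nonangular c ->
  dcoord c (fun u r x y => F u r x y * k x y) u r x y = dcoord c F u r x y * k x y.
Proof. intros [-> | ->]; apply Derive_scal_l. Qed.

Lemma dcoord_d_ang c A f : nonangular c -> smooth_on D f ->
  eq_on (dcoord c (d_ang A f)) (d_ang A (dcoord c f)).
Proof.
  intros Hc Hf u r x y H. rewrite !d_ang_dcoord.
  rewrite <- (dcoord_comm c (angular A) f) by (auto; destruct A, Hc as [-> | ->]; discriminate).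
  apply dcoord_eq_on; [|exact H]. intros ? ? ? ? _. apply d_ang_dcoord.
Qed.

Ltac expand_dcoord Hc :=
  repeat first [ rewrite dcoord_plus by regular | rewrite dcoord_minus by regular
               | rewrite (dcoord_coef_l _ _ _ _ _ _ _ Hc)
               | rewrite (dcoord_coef_r _ _ _ _ _ _ _ Hc) ].

Lemma d_ang_radial A (phi : R -> R) F u r x y :
  d_ang A (fun u r x y => phi r * F u r x y) u r x y = phi r * d_ang A F u r x y.
Proof. destruct A; apply Derive_scal. Qed.

Lemma d_u_radial (phi : R -> R) F u r x y :
  d_u (fun u r x y => phi r * F u r x y) u r x y = phi r * d_u F u r x y.
Proof. apply Derive_scal. Qed.

Lemma d_r_radial (phi : R -> R) dphi F u r x y :
  is_derive phi r dphi -> smooth_on D F -> D (u, r, x, y) ->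
  d_r (fun u r x y => phi r * F u r x y) u r x y = dphi * F u r x y + phi r * d_r F u r x y.
Proof.
  intros Hphi HF H. destruct (smooth_on_regular_at F _ HF H) as [_ HdF].
  unfold d_r.
  rewrite (Derive_mult phi (fun t => F u t x y)); [|eexists; exact Hphi | exact (HdF Cr)].
  rewrite (is_derive_unique _ _ _ Hphi). reflexivity.
Qed.

Lemma d_ang_radial_comb A (p1 p2 : R -> R) F G u r x y :
  smooth_on D F -> smooth_on D G -> D (u, r, x, y) ->
  d_ang A (fun u r x y => p1 r * F u r x y + p2 r * G u r x y) u r x y
  = p1 r * d_ang A F u r x y + p2 r * d_ang A G u r x y.
Proof.
  intros HF HG H.
  destruct (smooth_on_regular_at F _ HF H) as [_ DF], (smooth_on_regular_at G _ HG H) as [_ DG].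
  destruct A; [specialize (DF Cx); specialize (DG Cx) | specialize (DF Cy); specialize (DG Cy)];
    simpl in DF, DG; unfold d_ang, d_x, d_y;
    rewrite Derive_plus, !Derive_scal by (apply ex_derive_scal; assumption); reflexivity.
Qed.

Section Metric.

Variable g : metric.
Hypothesis g_smooth : forall A B, smooth_on D (fun _ _ x y => g A B x y).
Hypothesis det_g_neq0 : forall u r x y, D (u, r, x, y) -> det_g g x y <> 0.

#[local] Hint Resolve g_smooth det_g_neq0 : smooth.

Lemma smooth_on_det_g : smooth_on D (fun _ _ x y => det_g g x y).
Proof. unfold det_g. smooth. Qed.

#[local] Hint Resolve smooth_on_det_g : smooth.

Lemma smooth_on_ginv A B : smooth_on D (fun _ _ x y => ginv g A B x y).
Proof. destruct A, B; unfold ginv; smooth. Qed.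

#[local] Hint Resolve smooth_on_ginv : smooth.

(* Qualified because Coquelicot also exports a [d2]. *)
Lemma smooth_on_d2 A (F : R -> R -> R) :
  smooth_on D (fun _ _ x y => F x y) -> smooth_on D (fun _ _ x y => Defs.d2 A F x y).
Proof. destruct A; [apply (smooth_on_dcoord Cx) | apply (smooth_on_dcoord Cy)]. Qed.

#[local] Hint Extern 1 (smooth_on _ (fun _ _ x y => Defs.d2 ?A ?F x y)) =>
  apply (smooth_on_d2 A F); smooth : smooth.

Lemma smooth_on_Gam C A B : smooth_on D (fun _ _ x y => Gam g C A B x y).
Proof. unfold Gam. smooth. Qed.

#[local] Hint Resolve smooth_on_Gam : smooth.

Lemma smooth_on_Dcov1 w A B : (forall C, smooth_on D (w C)) -> smooth_on D (Dcov1 g w A B).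
Proof. intros Hw. unfold Dcov1. smooth. Qed.

Lemma smooth_on_Dcov2 X A B C : (forall C E, smooth_on D (X C E)) -> smooth_on D (Dcov2 g X A B C).
Proof. intros HX. unfold Dcov2. smooth. Qed.

#[local] Hint Extern 1 (smooth_on _ (Dcov1 _ _ _ _)) => apply smooth_on_Dcov1; smooth : smooth.
#[local] Hint Extern 1 (smooth_on _ (Dcov2 _ _ _ _ _)) => apply smooth_on_Dcov2; smooth : smooth.

Lemma smooth_on_div2 X A : (forall C E, smooth_on D (X C E)) -> smooth_on D (div2 g X A).
Proof. intros HX. unfold div2. smooth. Qed.

Lemma smooth_on_TS X A B : (forall C E, smooth_on D (X C E)) -> smooth_on D (TS g X A B).
Proof. intros HX. unfold TS. smooth. Qed.

#[local] Hint Extern 1 (smooth_on _ (div2 _ _ _)) => apply smooth_on_div2; smooth : smooth.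
#[local] Hint Extern 1 (smooth_on _ (TS _ _ _ _)) => apply smooth_on_TS; smooth : smooth.

Lemma smooth_on_Pop X A B : (forall C E, smooth_on D (X C E)) -> smooth_on D (Pop g X A B).
Proof. intros HX. unfold Pop. smooth. Qed.

#[local] Hint Extern 1 (smooth_on _ (Pop _ _ _ _)) => apply smooth_on_Pop; smooth : smooth.

Lemma dcoord_Dcov1 c w A B : nonangular c -> (forall C, smooth_on D (w C)) ->
  eq_on (dcoord c (Dcov1 g w A B)) (Dcov1 g (fun C => dcoord c (w C)) A B).
Proof.
  intros Hc Hw u r x y H. unfold Dcov1, sum2. expand_dcoord Hc.
  rewrite (dcoord_d_ang c A (w B) Hc (Hw B) u r x y H). reflexivity.
Qed.

Lemma dcoord_Dcov2 c X A B C : nonangular c -> (forall C E, smooth_on D (X C E)) ->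
  eq_on (dcoord c (Dcov2 g X A B C)) (Dcov2 g (fun C E => dcoord c (X C E)) A B C).
Proof.
  intros Hc HX u r x y H. unfold Dcov2, sum2. expand_dcoord Hc.
  rewrite (dcoord_d_ang c A (X B C) Hc (HX B C) u r x y H). reflexivity.
Qed.

Lemma dcoord_div2 c X A : nonangular c -> (forall C E, smooth_on D (X C E)) ->
  eq_on (dcoord c (div2 g X A)) (div2 g (fun C E => dcoord c (X C E)) A).
Proof.
  intros Hc HX u r x y H. unfold div2, sum2. expand_dcoord Hc.
  rewrite !(dcoord_Dcov2 c X _ _ _ Hc HX u r x y H). reflexivity.
Qed.

Lemma dcoord_TS c X A B : nonangular c -> (forall C E, smooth_on D (X C E)) ->
  eq_on (dcoord c (TS g X A B)) (TS g (fun C E => dcoord c (X C E)) A B).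
Proof. intros Hc HX u r x y H. unfold TS, sum2. expand_dcoord Hc. reflexivity. Qed.

Lemma Dcov1_eq_on w w' A B : (forall C, eq_on (w C) (w' C)) ->
  eq_on (Dcov1 g w A B) (Dcov1 g w' A B).
Proof.
  intros E u r x y H. unfold Dcov1, sum2.
  rewrite !(E _ u r x y H), (d_ang_eq_on A _ _ (E B) u r x y H). reflexivity.
Qed.

Lemma div2_eq_on X X' A : (forall C E, eq_on (X C E) (X' C E)) ->
  eq_on (div2 g X A) (div2 g X' A).
Proof.
  intros E u r x y H. unfold div2, Dcov2, sum2.
  rewrite !(E _ _ u r x y H), !(d_ang_eq_on _ _ _ (E _ _) u r x y H). reflexivity.
Qed.

Lemma TS_eq_on X X' A B : (forall C E, eq_on (X C E) (X' C E)) ->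
  eq_on (TS g X A B) (TS g X' A B).
Proof. intros E u r x y H. unfold TS, sum2. rewrite !(E _ _ u r x y H). reflexivity. Qed.

Lemma dcoord_TS_Dcov1 c w A B : nonangular c -> (forall C, smooth_on D (w C)) ->
  eq_on (dcoord c (TS g (Dcov1 g w) A B)) (TS g (Dcov1 g (fun C => dcoord c (w C))) A B).
Proof.
  intros Hc Hw u r x y H. rewrite (dcoord_TS c _ A B Hc) by smooth.
  apply TS_eq_on; [|exact H]. intros C E. apply dcoord_Dcov1; assumption.
Qed.

Lemma dcoord_Pop c X A B : nonangular c -> (forall C E, smooth_on D (X C E)) ->
  eq_on (dcoord c (Pop g X A B)) (Pop g (fun C E => dcoord c (X C E)) A B).
Proof.
  intros Hc HX u r x y H. unfold Pop.
  rewrite (dcoord_TS_Dcov1 c _ A B Hc) by smooth.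
  apply TS_eq_on; [|exact H]. intros C E. apply Dcov1_eq_on. intros C'.
  apply dcoord_div2; assumption.
Qed.

Lemma div2_radial (phi : R -> R) X A u r x y :
  div2 g (fun C E u r x y => phi r * X C E u r x y) A u r x y = phi r * div2 g X A u r x y.
Proof. unfold div2, Dcov2, sum2. rewrite !d_ang_radial. ring. Qed.

Lemma TS_Dcov1_radial_comb (p1 p2 : R -> R) (w1 w2 : idx -> field) A B u r x y :
  (forall C, smooth_on D (w1 C)) -> (forall C, smooth_on D (w2 C)) -> D (u, r, x, y) ->
  TS g (Dcov1 g (fun C u r x y => p1 r * w1 C u r x y + p2 r * w2 C u r x y)) A B u r x y
  = p1 r * TS g (Dcov1 g w1) A B u r x y + p2 r * TS g (Dcov1 g w2) A B u r x y.
Proof.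
  intros H1 H2 H. unfold TS, Dcov1, sum2.
  rewrite !(d_ang_radial_comb _ p1 p2) by auto. ring.
Qed.

Section Equations.

Variables eps a2 m : R.
Hypothesis r_pos : forall u r x y, D (u, r, x, y) -> 0 < r.

#[local] Hint Extern 1 (_ <> 0) =>
  match goal with H : D (_, ?r, _, _) |- _ =>
    pose proof (r_pos _ _ _ _ H); first [lra | apply pow_nonzero; lra]
  end : smooth.

Lemma smooth_on_Vfun : smooth_on D (fun _ r _ _ => Vfun eps a2 m r).
Proof. unfold Vfun. smooth. Qed.

#[local] Hint Resolve smooth_on_Vfun : smooth.

(* Eq1, Eq2, Qbracket and Q3 as operators on the rescaled fields: [Eq1 g hu h A] is convertible
   to [Eq1_op g (chk1 hu) (chk2 h) A], and [Q3 g eps a2 m i hu h A] to [Q3_op g eps a2 m a b A]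
   with [a C := d_u_n i (chk1 hu C)] and [b C E := d_u_n i (chk2 h C E)]. *)
Definition Eq1_op (a : idx -> field) (b : idx -> idx -> field) (A : idx) : field :=
  fun u r x y =>
    d_r (fun u r x y => r ^ 4 * d_r (a A) u r x y) u r x y
    - div2 g (fun A B u r x y => r ^ 2 * d_r (b A B) u r x y) A u r x y.

Definition Eq2_op (a : idx -> field) (b : idx -> idx -> field) (A B : idx) : field :=
  fun u r x y =>
    d_r (fun u r x y =>
           r * d_u (b A B) u r x y
           - / 2 * Vfun eps a2 m r * d_r (b A B) u r x y
           - Vfun eps a2 m r / (2 * r) * b A B u r x y
           - r * TS g (Dcov1 g a) A B u r x y) u r x y
    + (m / r ^ 2 - a2 * r) * b A B u r x y
    - TS g (Dcov1 g a) A B u r x y.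

Definition Qbracket_op (a : idx -> field) (b : idx -> idx -> field) (A B : idx) : field :=
  fun u r x y =>
    2 * r * d_u (b A B) u r x y
    - Vfun eps a2 m r * d_r (b A B) u r x y
    - / r ^ 2 * d_r (fun u r x y => r ^ 4 * TS g (Dcov1 g a) A B u r x y) u r x y
    + Pop g b A B u r x y
    - eps * b A B u r x y.

Definition Q3_op (a : idx -> field) (b : idx -> idx -> field) (A : idx) : field :=
  fun u r x y =>
    div2 g (Qbracket_op a b) A u r x y
    + a2 * r ^ 4 * d_r (a A) u r x y
    + 2 * m * (3 * a A u r x y + r * d_r (a A) u r x y).

Lemma d_u_Eq1_op a b A : (forall C, smooth_on D (a C)) -> (forall C E, smooth_on D (b C E)) ->
  eq_on (d_u (Eq1_op a b A)) (Eq1_op (fun C => d_u (a C)) (fun C E => d_u (b C E)) A).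
Proof.
  intros Ha Hb u r x y H. unfold Eq1_op.
  rewrite (dcoord_minus Cu), (dcoord_comm Cu Cr), (dcoord_div2 Cu _ A Cu_nonangular)
    by first [exact H | discriminate | regular | smooth].
  cbv beta iota delta [dcoord]. f_equal.
  - apply (dcoord_eq_on Cr); [|exact H]. intros u' r' x' y' H'.
    rewrite d_u_radial, (dcoord_comm Cu Cr) by (discriminate || auto). reflexivity.
  - apply div2_eq_on; [|exact H]. intros C E u' r' x' y' H'.
    rewrite d_u_radial, (dcoord_comm Cu Cr) by (discriminate || auto). reflexivity.
Qed.

Lemma d_u_Eq2_op a b A B : (forall C, smooth_on D (a C)) -> (forall C E, smooth_on D (b C E)) ->
  eq_on (d_u (Eq2_op a b A B)) (Eq2_op (fun C => d_u (a C)) (fun C E => d_u (b C E)) A B).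
Proof.
  intros Ha Hb u r x y H. unfold Eq2_op.
  repeat first [rewrite (dcoord_minus Cu) by regular | rewrite (dcoord_plus Cu) by regular].
  rewrite (dcoord_comm Cu Cr), (dcoord_TS_Dcov1 Cu a A B Cu_nonangular)
    by first [exact H | discriminate | smooth].
  cbv beta iota delta [dcoord]. rewrite d_u_radial. do 2 f_equal.
  apply (dcoord_eq_on Cr); [|exact H]. intros u' r' x' y' H'.
  repeat rewrite (dcoord_minus Cu) by regular. cbv beta iota delta [dcoord].
  repeat rewrite d_u_radial.
  rewrite (dcoord_comm Cu Cr (b A B)), (dcoord_TS_Dcov1 Cu a A B Cu_nonangular)
    by first [exact H' | discriminate | auto].
  reflexivity.
Qed.

Section Solutions.

Variables (a : idx -> field) (b : idx -> idx -> field).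
Hypothesis a_smooth : forall C, smooth_on D (a C).
Hypothesis b_smooth : forall C E, smooth_on D (b C E).
Hypothesis Eq1_a_b : forall A, eq_on (Eq1_op a b A) (fun _ _ _ _ => 0).
Hypothesis Eq2_a_b : forall A B, eq_on (Eq2_op a b A B) (fun _ _ _ _ => 0).

Ltac nonzero := repeat split; intro; nra.
Ltac derive := auto_derive; [try nonzero | try (field; nonzero)].

Lemma div2_d_r_b C : eq_on (div2 g (fun C E => d_r (b C E)) C)
  (fun u r x y => 4 * r * d_r (a C) u r x y + r ^ 2 * d_r (d_r (a C)) u r x y).
Proof.
  intros u r x y H. pose proof (r_pos u r x y H) as Hr.
  pose proof (Eq1_a_b C u r x y H) as E1. unfold Eq1_op in E1.
  rewrite (d_r_radial (fun t => t ^ 4) (4 * r ^ 3)) in E1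
    by first [exact H | solve [smooth] | derive].
  rewrite (div2_radial (fun t => t ^ 2) (fun C E => d_r (b C E))) in E1.
  apply (Rmult_eq_reg_l (r ^ 2)); [nra | nonzero].
Qed.

Lemma Pop_d_r_b C E : eq_on (Pop g (fun C E => d_r (b C E)) C E)
  (fun u r x y => 4 * r * TS g (Dcov1 g (fun C => d_r (a C))) C E u r x y
                  + r ^ 2 * TS g (Dcov1 g (fun C => d_r (d_r (a C)))) C E u r x y).
Proof.
  intros u r x y H. unfold Pop.
  rewrite (TS_eq_on _ (Dcov1 g (fun C u r x y =>
             4 * r * d_r (a C) u r x y + r ^ 2 * d_r (d_r (a C)) u r x y)) C E)
    by first [exact H | intros; apply Dcov1_eq_on, div2_d_r_b].
  apply (TS_Dcov1_radial_comb (fun t => 4 * t) (fun t => t ^ 2)); smooth.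
Qed.

Lemma d_r_Qbracket_op C E : eq_on (d_r (Qbracket_op a b C E))
  (fun u r x y => 2 * Eq2_op a b C E u r x y - (a2 * r ^ 2 + 2 * m / r) * d_r (b C E) u r x y).
Proof.
  intros u r x y H. pose proof (r_pos u r x y H) as Hr.
  unfold Qbracket_op, Eq2_op.
  repeat first [rewrite (dcoord_minus Cr) by regular | rewrite (dcoord_plus Cr) by regular].
  cbv beta iota delta [dcoord].
  rewrite (d_r_radial (fun t => 2 * t) 2), (d_r_radial (Vfun eps a2 m) (eps - 3 * a2 * r ^ 2)),
    (d_r_radial (fun t => / t ^ 2) (- 2 / r ^ 3)), (d_r_radial (fun _ => eps) 0),
    (d_r_radial (fun t => t) 1), (d_r_radial (fun t => t) 1),
    (d_r_radial (fun t => / 2 * Vfun eps a2 m t) (/ 2 * (eps - 3 * a2 * r ^ 2))),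
    (d_r_radial (fun t => Vfun eps a2 m t / (2 * t))
       ((eps - 3 * a2 * r ^ 2) / (2 * r) - Vfun eps a2 m r / (2 * r ^ 2)))
    by first [exact H | solve [smooth] | unfold Vfun; derive].
  assert (HT4 : eq_on (d_r (fun u r x y => r ^ 4 * TS g (Dcov1 g a) C E u r x y))
    (fun u r x y => 4 * r ^ 3 * TS g (Dcov1 g a) C E u r x y
                    + r ^ 4 * d_r (TS g (Dcov1 g a) C E) u r x y)).
  { intros u' r' x' y' H'. apply (d_r_radial (fun t => t ^ 4)); [derive | smooth | exact H']. }
  rewrite (dcoord_eq_on Cr _ _ HT4), HT4 by exact H.
  rewrite (dcoord_plus Cr) by regular. cbv beta iota delta [dcoord].
  rewrite (d_r_radial (fun t => 4 * t ^ 3) (12 * r ^ 2)), (d_r_radial (fun t => t ^ 4) (4 * r ^ 3))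
    by first [exact H | solve [smooth] | derive].
  rewrite (dcoord_Pop Cr b C E Cr_nonangular b_smooth), Pop_d_r_b by exact H.
  rewrite (dcoord_eq_on Cr _ _ (dcoord_TS_Dcov1 Cr a C E Cr_nonangular a_smooth)) by exact H.
  rewrite !(dcoord_TS_Dcov1 Cr _ C E Cr_nonangular) by first [exact H | smooth].
  cbv beta iota delta [dcoord]. unfold Vfun. field. nonzero.
Qed.

Lemma d_r_Q3_op A : eq_on (d_r (Q3_op a b A)) (fun _ _ _ _ => 0).
Proof.
  intros u r x y H. pose proof (r_pos u r x y H) as Hr.
  assert (HQ : forall C E, smooth_on D (Qbracket_op a b C E))
    by (intros; unfold Qbracket_op; smooth).
  assert (HdQ : forall C E, eq_on (d_r (Qbracket_op a b C E))
                  (fun u r x y => - (a2 * r ^ 2 + 2 * m / r) * d_r (b C E) u r x y)).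
  { intros C E u' r' x' y' H'. rewrite d_r_Qbracket_op, Eq2_a_b by exact H'. ring. }
  unfold Q3_op.
  repeat rewrite (dcoord_plus Cr) by regular. cbv beta iota delta [dcoord].
  rewrite (dcoord_div2 Cr _ A Cr_nonangular HQ), (div2_eq_on _ _ A HdQ) by exact H.
  rewrite (div2_radial (fun t => - (a2 * t ^ 2 + 2 * m / t)) (fun C E => d_r (b C E))), div2_d_r_b
    by exact H.
  rewrite (d_r_radial (fun t => a2 * t ^ 4) (4 * a2 * r ^ 3)), (d_r_radial (fun _ => 2 * m) 0)
    by first [exact H | solve [smooth] | derive].
  rewrite (dcoord_plus Cr) by regular. cbv beta iota delta [dcoord].
  rewrite (d_r_radial (fun _ => 3) 0), (d_r_radial (fun t => t) 1)
    by first [exact H | solve [smooth] | derive].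
  field. nonzero.
Qed.

End Solutions.

Lemma smooth_on_chk1 hu : (forall C, smooth_on D (hu C)) -> forall C, smooth_on D (chk1 hu C).
Proof. intros Hhu C. unfold chk1. smooth. Qed.

Lemma smooth_on_chk2 h : (forall C E, smooth_on D (h C E)) -> forall C E, smooth_on D (chk2 h C E).
Proof. intros Hh C E. unfold chk2. smooth. Qed.

Lemma d_r_Q3 i hu h : (forall C, smooth_on D (hu C)) -> (forall C E, smooth_on D (h C E)) ->
  (forall A, eq_on (d_u_n i (Eq1 g hu h A)) (fun _ _ _ _ => 0)) ->
  (forall A B, eq_on (d_u_n i (Eq2 g eps a2 m hu h A B)) (fun _ _ _ _ => 0)) ->
  forall A, eq_on (d_r (Q3 g eps a2 m i hu h A)) (fun _ _ _ _ => 0).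
Proof.
  intros Hhu Hh HEq1 HEq2 A.
  pose proof (smooth_on_chk1 hu Hhu) as Ha. pose proof (smooth_on_chk2 h Hh) as Hb.
  apply (d_r_Q3_op (fun C => d_u_n i (chk1 hu C)) (fun C E => d_u_n i (chk2 h C E)));
    [intros; apply smooth_on_d_u_n; auto .. | |].
  - intros A' u r x y H. rewrite <- (HEq1 A' u r x y H). symmetry.
    apply (d_u_n_commute (fun a b => Eq1_op a b A')); [|assumption ..].
    intros a b. apply d_u_Eq1_op.
  - intros A' B' u r x y H. rewrite <- (HEq2 A' B' u r x y H). symmetry.
    apply (d_u_n_commute (fun a b => Eq2_op a b A' B')); [|assumption ..].
    intros a b. apply d_u_Eq2_op.
Qed.

End Equations.

End Metric.
End Regularity.

Theorem lemma3p1
  (eps m a2 : R) (heps : eps = 0 \/ eps = 1 \/ eps = -1)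
  (U : R * R -> Prop) (hU : open U)
  (g : metric)
  (g_smooth : forall A B, smooth_on (fun p => match p with (_, _, x, y) => U (x, y) end)
                                    (lift (g A B)))
  (g_sym : forall x y, U (x, y) -> g I1 I2 x y = g I2 I1 x y)
  (g_pos : forall x y, U (x, y) -> 0 < g I1 I1 x y /\ 0 < det_g g x y)
  (g_curv : forall x y, U (x, y) -> gauss_curv g x y = eps)
  (D : R * R * R * R -> Prop) (hD : open D)
  (hDdom : forall u r x y, D (u, r, x, y) -> 0 < r /\ U (x, y))
  (hu : idx -> field) (h : idx -> idx -> field)
  (hu_smooth : forall A, smooth_on D (hu A))
  (h_smooth : forall A B, smooth_on D (h A B))
  (h_sym : forall A B u r x y, D (u, r, x, y) -> h A B u r x y = h B A u r x y)
  (h_tl : forall u r x y, D (u, r, x, y) ->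
            sum2 (fun A => sum2 (fun B => ginv g A B x y * h A B u r x y)) = 0)
  (i : nat)
  (eq1 : forall A u r x y, D (u, r, x, y) -> d_u_n i (Eq1 g hu h A) u r x y = 0)
  (eq2 : forall A B u r x y, D (u, r, x, y) ->
           d_u_n i (Eq2 g eps a2 m hu h A B) u r x y = 0) :
  forall A u r x y, D (u, r, x, y) -> d_r (Q3 g eps a2 m i hu h A) u r x y = 0.
Proof.
  assert (g_smooth_D : forall A B, smooth_on D (fun _ _ x y => g A B x y)).
  { intros A B l u r x y H. exact (g_smooth A B l u r x y (proj2 (hDdom u r x y H))). }
  assert (det_neq0 : forall u r x y, D (u, r, x, y) -> det_g g x y <> 0).
  { intros u r x y H. apply Rgt_not_eq, (g_pos x y), (hDdom u r x y H). }
  exact (d_r_Q3 D hD g g_smooth_D det_neq0 eps a2 m (fun u r x y H => proj1 (hDdom u r x y H))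
           i hu h hu_smooth h_smooth eq1 eq2).
Qed.
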